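(* Let $G(n,n_1,n_2,n_3,p_1,p_2,p_3)$ be a three-layer stochastic block model network satisfying the standing assumptions below. Fix any one of the three layers as target layer, and apply ReduceEdge to all communities of the other two layers. Then the (expected) modularity of the target layer's partition in the resulting graph is strictly larger than in the original graph.
   Context: Multi-layer stochastic block model $G(n,n_1,\dots,n_L,p_1,\dots,p_L)$: a random graph on $n$ nodes with $L$ layers. For each layer $l$ the nodes are partitioned into $n_l$ planted communities of size $s_l=n/n_l$; independently for each layer, each pair of distinct nodes in a common community of layer $l$ receives an edge from layer $l$ with probability $p_l$; the graph is the simple union of all generated edges, so a pair lying in a common community of exactly the layers in a set $T$ is an edge with probability $1-\prod_{l\in T}(1-p_l)$. The partitions of different layers are independent: for any $k\ge2$ distinct layers and one community from each, their intersection has $n/(n_{l_1}\cdots n_{l_k})$ nodes (in expectation). Standing assumptions: $n_l\ge4$, $p_l\in[0.05,1]$ for every layer, and $n\ge2\prod_l n_l$. ReduceEdge on a layer $l$: for a community $i$ of layer $l$ with size $s_l$, $e^i_{ll}$ internal edges and $e^i_{lout}$ outgoing edges (edges with exactly one endpoint in $i$), set $\widehat{p^i_l}=e^i_{ll}/(\tfrac12 s_l(s_l-1))$, $\widehat{q^i_l}=e^i_{lout}/(s_l(n-s_l))$ and $q^i_l=\widehat{q^i_l}/\widehat{p^i_l}$; each internal edge of community $i$ is kept independently with probability $q^i_l$ (removed with probability $1-q^i_l$). In the model these quantities are computed from expected edge counts, giving a common retention probability $q_l$ for all communities of layer $l$; when two layers are reduced, an edge internal to communities of both is kept with probability equal to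 the product of the two retention probabilities. Modularity of a layer $l$: for a graph with $e$ edges, $Q_l=\sum_i\big(\frac{e^i_{ll}}{e}-(\frac{d^i_l}{2e})^2\big)$ with $d^i_l=2e^i_{ll}+e^i_{lout}$, all edge counts being replaced by their expected values. *)

From mathcomp Require Import all_boot all_order all_algebra.
Set Implicit Arguments. Unset Strict Implicit. Unset Printing Implicit Defensive.
Import Order.TTheory GRing.Theory Num.Theory.
Local Open Scope ring_scope.

Section SBM.
Variables (R : realFieldType) (L : nat) (n : nat) (nl : 'I_L -> nat).

Definition prodn (S : {set 'I_L}) : R := \prod_(l in S) (nl l)%:R.

Definition csize (l : 'I_L) : R := n%:R / (nl l)%:R.

(* expected number of node pairs of the whole graph lying in a common
   community of (at least) every layer of S: the S-intersections have
   n / prod_S n_l nodes and there are prod_S n_l of them *)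
Definition graph_atleast (S : {set 'I_L}) : R :=
  n%:R / 2 * (n%:R / prodn S - 1).

(* pairs inside a fixed community i of layer l sharing (at least) the
   layers of S (they automatically share l) *)
Definition inner_atleast (l : 'I_L) (S : {set 'I_L}) : R :=
  csize l / 2 * (n%:R / prodn (l |: S) - 1).

(* pairs with exactly one endpoint in a fixed community i of layer l
   sharing (at least) the layers of S; zero when l \in S *)
Definition out_atleast (l : 'I_L) (S : {set 'I_L}) : R :=
  csize l * (n%:R / prodn S - n%:R / prodn (l |: S)).

(* Moebius inversion: from "at least the layers of S" to "exactly T" *)
Definition exactly (f : {set 'I_L} -> R) (T : {set 'I_L}) : R :=
  \sum_(S : {set 'I_L} | T \subset S) (-1) ^+ #|S :\: T| * f S.

(* A graph of the model is described by w T = probability that a pair lying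
   in a common community of exactly the layers in T is an edge. *)
Definition exp_edges (w : {set 'I_L} -> R) : R :=
  \sum_(T : {set 'I_L}) exactly graph_atleast T * w T.
Definition exp_inner (w : {set 'I_L} -> R) (l : 'I_L) : R :=
  \sum_(T : {set 'I_L}) exactly (inner_atleast l) T * w T.
Definition exp_out (w : {set 'I_L} -> R) (l : 'I_L) : R :=
  \sum_(T : {set 'I_L}) exactly (out_atleast l) T * w T.

(* Q_l = sum over the n_l (identical in expectation) communities i of
   e^i_ll / e - (d^i_l / 2e)^2 *)
Definition modularity (w : {set 'I_L} -> R) (l : 'I_L) : R :=
  \sum_(i < nl l)
    (exp_inner w l / exp_edges w
     - ((2 * exp_inner w l + exp_out w l) / (2 * exp_edges w)) ^+ 2).

Definition orig_prob (p : 'I_L -> R) (T : {set 'I_L}) : R :=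
  1 - \prod_(l in T) (1 - p l).

Definition retention (w : {set 'I_L} -> R) (l : 'I_L) : R :=
  let s := csize l in
  let phat := exp_inner w l / (s * (s - 1) / 2) in
  let qhat := exp_out w l / (s * (n%:R - s)) in
  qhat / phat.

(* graph after applying ReduceEdge to all communities of the layers in Red
   (retention probabilities computed on the original graph w); an edge
   internal to communities of several reduced layers is kept with the
   product of their retention probabilities *)
Definition reduced (w : {set 'I_L} -> R) (Red : {set 'I_L}) (T : {set 'I_L}) : R :=
  w T * \prod_(l in T :&: Red) retention w l.

End SBM.

(* In expectation every community of a layer l has the same degree 2e / n_l,
   so the modularity of layer t is A / (A + B) - 1 / n_t, where A and B count
   the expected edges inside and outside the communities of t; it increases
   iff the share A / (A + B) does.  Classify node pairs by the set of layers
   whose communities they share: Moebius inversion of the "at least" counts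
   turns them into the products prod_l (1/n_l or 1 - 1/n_l) of independent
   layers.  With three layers, A and B become sums over the four types of the
   two reduced layers u and v, and ReduceEdge multiplies the edge probability
   of the pairs sharing u (resp. v) by r_u (resp. r_v).  The density
   assumptions give 0 <= r < 1, and the cross difference A(r) B(1) - A(1) B(r)
   has an explicit decomposition into nonnegative terms, one of them positive:
   pairs sharing only layer t are never reduced. *)

From mathcomp Require Import all_boot all_order all_algebra.
From mathcomp Require Import ring lra.
Set Implicit Arguments. Unset Strict Implicit. Unset Printing Implicit Defensive.
Import Order.TTheory GRing.Theory Num.Theory.
Local Open Scope ring_scope.

Section ExactTypes.
Variables (R : realFieldType) (L : nat).
Implicit Types (f g : {set 'I_L} -> R) (S T : {set 'I_L}) (th : 'I_L -> R).

Lemma eq_exactly f g T : f =1 g -> exactly f T = exactly g T.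
Proof. by move=> fg; apply: eq_bigr => S _; rewrite fg. Qed.

Lemma exactlyZ (c : R) f T : exactly (fun S => c * f S) T = c * exactly f T.
Proof. by rewrite /exactly mulr_sumr; apply: eq_bigr => S _; rewrite mulrCA. Qed.

Lemma exactlyB f g T : exactly (fun S => f S - g S) T = exactly f T - exactly g T.
Proof. by rewrite /exactly -sumrB; apply: eq_bigr => S _; rewrite mulrBr. Qed.

(* Expanding prod_i ((th i or - th i) + [i \notin T]) over the subsets S of
   'I_L (bigA_distr), the summand of S vanishes unless T \subset S, where it
   is (-1) ^+ #|S :\: T| * prod_(i in S) th i. *)
Lemma exactly_prod th T :
  exactly (fun S => \prod_(i in S) th i) T =
  \prod_i (if i \in T then th i else 1 - th i).
Proof.
rewrite [RHS](_ : _ =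
    \prod_i ((if i \in T then th i else - th i) + (i \notin T)%:R)); last first.
  by apply: eq_bigr => i _; case: (i \in T); rewrite ?addr0 // addrC.
rewrite bigA_distr /exactly big_mkcond /=; apply: eq_big => // S _.
have [sTS | /subsetPn[i iT iS]] := boolP (T \subset S); last first.
  by rewrite (bigD1 i) //= (negbTE iS) iT mul0r.
rewrite -prodr_const big_mkcond [X in _ * X]big_mkcond -big_split /=.
apply: eq_bigr => i _; rewrite in_setD.
case: (boolP (i \in T)) => [iT | _]; first by rewrite (subsetP sTS) // mul1r.
by case: (i \in S); rewrite ?mulN1r ?mulr1.
Qed.

Lemma prod_setU1 th l S :
  \prod_(i in l |: S) th i = th l * \prod_(i in S) (if i == l then 1 else th i).
Proof.
rewrite big_mkcond [in RHS]big_mkcond (bigD1 l) //= [in RHS](bigD1 l) //=.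
rewrite setU11 eqxx if_same mul1r.
by congr (_ * _); apply: eq_bigr => i /negbTE il; rewrite in_setU1 il.
Qed.

Lemma exactly_prod_setU1 th l T :
  exactly (fun S => \prod_(i in l |: S) th i) T =
  if l \in T then exactly (fun S => \prod_(i in S) th i) T else 0.
Proof.
rewrite (eq_exactly _ (prod_setU1 th l)) exactlyZ !exactly_prod.
rewrite (bigD1 l) //= eqxx; case: ifP => lT; last by rewrite subrr mul0r mulr0.
rewrite mul1r [in RHS](bigD1 l) //= lT; congr (_ * _).
by apply: eq_bigr => i /negbTE il; rewrite il.
Qed.

End ExactTypes.

Section ExpectedCounts.
Variables (R : realFieldType) (L n : nat) (nl : 'I_L -> nat).
Implicit Types (w : {set 'I_L} -> R) (S T : {set 'I_L}) (l : 'I_L).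

Local Notation graph := (graph_atleast R n nl).

Lemma graph_atleastE S :
  graph S = n%:R ^+ 2 / 2 * \prod_(i in S) (nl i)%:R^-1 - n%:R / 2 * \prod_(i in S) 1.
Proof. by rewrite /graph_atleast /prodn -prodfV big1_eq; ring. Qed.

Lemma exactly_graph_setU1 l T :
  exactly (fun S => graph (l |: S)) T = if l \in T then exactly graph T else 0.
Proof.
rewrite (eq_exactly _ graph_atleastE) (eq_exactly _ (fun S => graph_atleastE (l |: S))).
rewrite !exactlyB !exactlyZ !exactly_prod_setU1.
by case: ifP; rewrite ?mulr0 ?subrr.
Qed.

Lemma exactly_inner l T :
  exactly (inner_atleast R n nl l) T =
  (nl l)%:R^-1 * (if l \in T then exactly graph T else 0).
Proof.
rewrite -exactly_graph_setU1 -exactlyZ; apply: eq_exactly => S.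
by rewrite /inner_atleast /graph_atleast /csize; ring.
Qed.

Lemma exactly_out l T :
  exactly (out_atleast R n nl l) T =
  2 * (nl l)%:R^-1 * (if l \in T then 0 else exactly graph T).
Proof.
rewrite (eq_exactly _ (g := fun S => 2 * (nl l)%:R^-1 * (graph S - graph (l |: S)))).
  by rewrite exactlyZ exactlyB exactly_graph_setU1; case: ifP; rewrite ?subrr ?subr0.
move=> S; rewrite /out_atleast /graph_atleast /csize.
(* hide the denominators prodn, which need not be nonzero, from field *)
set a := n%:R / prodn R nl S; set b := n%:R / prodn R nl (l |: S); set th := (nl l)%:R^-1.
by field.
Qed.

Definition intra w l := \sum_(T : {set 'I_L} | l \in T) exactly graph T * w T.
Definition inter w l := \sum_(T : {set 'I_L} | l \notin T) exactly graph T * w T.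

Lemma exp_edges_split w l : exp_edges n nl w = intra w l + inter w l.
Proof. exact: bigID. Qed.

Lemma exp_inner_intra w l : exp_inner n nl w l = (nl l)%:R^-1 * intra w l.
Proof.
rewrite /exp_inner /intra mulr_sumr [RHS]big_mkcond; apply: eq_bigr => T _.
by rewrite exactly_inner; case: ifP; rewrite ?mulrA // mulr0 mul0r.
Qed.

Lemma exp_out_inter w l : exp_out n nl w l = 2 * (nl l)%:R^-1 * inter w l.
Proof.
rewrite /exp_out /inter mulr_sumr [RHS]big_mkcond; apply: eq_bigr => T _.
by rewrite exactly_out; case: ifP; rewrite ?mulrA // mulr0 mul0r.
Qed.

Lemma modularity_intra w l :
  (nl l)%:R != 0 :> R -> intra w l + inter w l != 0 ->
  modularity n nl w l = intra w l / (intra w l + inter w l) - (nl l)%:R^-1.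
Proof.
move=> nl0 e0; rewrite /modularity sumr_const card_ord -mulr_natl.
rewrite (exp_edges_split w l) exp_inner_intra exp_out_inter.
by field; rewrite nl0 e0.
Qed.

Lemma retention_intra w l :
  let s := csize R n nl l in
  (nl l)%:R != 0 :> R -> intra w l != 0 -> s != 0 -> s - 1 != 0 -> n%:R - s != 0 ->
  retention n nl w l = inter w l * (s - 1) / (intra w l * (n%:R - s)).
Proof.
move=> s nl0 i0 s0 s1 ns; rewrite /retention exp_inner_intra exp_out_inter -/s.
by field; rewrite nl0 i0 s0 s1 ns.
Qed.

End ExpectedCounts.

Lemma ltr_share (R : realFieldType) (a b c d : R) :
  0 < a -> 0 <= b -> 0 < c -> 0 <= d -> a * d < c * b ->
  a / (a + b) < c / (c + d).
Proof.
move=> a0 b0 c0 d0 adcb.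
by rewrite ltr_pdivrMr ?ltr_wpDr // mulrAC ltr_pdivlMr ?ltr_wpDr //; nra.
Qed.

Section ThreeLayers.
Variables t u v : 'I_3.
Hypotheses (tu : t != u) (tv : t != v) (uv : u != v).

Lemma cover3 x : [|| x == t, x == u | x == v].
Proof. by move: x t u v tu tv uv; do 4![case=> [[|[|[|?]]] ?]]. Qed.

Lemma prod3 (R : comRingType) (F : 'I_3 -> R) : \prod_i F i = F t * F u * F v.
Proof.
rewrite (bigD1 t) // (bigD1 u) 1?eq_sym //= (bigD1 v) /=; last first.
  by rewrite eq_sym tv eq_sym uv.
rewrite big_pred0 ?mulr1 ?mulrA // => x.
by case/or3P: (cover3 x) => /eqP->; rewrite ?eqxx ?andbF.
Qed.

Definition enc (a b c : bool) : {set 'I_3} :=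
  [set x | [|| a && (x == t), b && (x == u) | c && (x == v)]].

Lemma enc_t a b c : (t \in enc a b c) = a.
Proof. by rewrite inE eqxx (negbTE tu) (negbTE tv) !andbF !orbF andbT. Qed.

Lemma enc_u a b c : (u \in enc a b c) = b.
Proof. by rewrite inE eqxx eq_sym (negbTE tu) (negbTE uv) !andbF andbT orbF. Qed.

Lemma enc_v a b c : (v \in enc a b c) = c.
Proof. by rewrite inE eqxx eq_sym (negbTE tv) eq_sym (negbTE uv) !andbF andbT. Qed.

Lemma encK (T : {set 'I_3}) : enc (t \in T) (u \in T) (v \in T) = T.
Proof.
by apply/setP => x; case/or3P: (cover3 x) => /eqP->; rewrite ?enc_t ?enc_u ?enc_v.
Qed.

Lemma sum_enc (R : nmodType) (F : {set 'I_3} -> R) :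
  \sum_T F T = \sum_(a : bool) \sum_(b : bool) \sum_(c : bool) F (enc a b c).
Proof.
rewrite !pair_bigA /= (reindex (fun x : bool * bool * bool => enc x.1.1 x.1.2 x.2)) //=.
exists (fun T : {set 'I_3} => (t \in T, u \in T, v \in T)) => [[[a b] c] _ | T _] /=.
  by rewrite enc_t enc_u enc_v.
exact: encK.
Qed.

Lemma prod_enc (R : comRingType) (F G : 'I_3 -> R) a b c :
  \prod_i (if i \in enc a b c then F i else G i) =
  (if a then F t else G t) * (if b then F u else G u) * (if c then F v else G v).
Proof. by rewrite prod3 enc_t enc_u enc_v. Qed.

Lemma enc_setC1 a b c : enc a b c :&: [set~ t] = enc false b c.
Proof.
apply/setP => x; rewrite in_setI in_setC1.
case/or3P: (cover3 x) => /eqP->; rewrite ?enc_t ?enc_u ?enc_v ?eqxx ?andbF //.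
  by rewrite eq_sym tu andbT.
by rewrite eq_sym tv andbT.
Qed.

End ThreeLayers.

Lemma union_gap_ge0 (R : realFieldType) (pu pv ru rv : R) :
  0 <= pu <= 1 -> 0 <= pv <= 1 -> 0 <= ru <= 1 -> 0 <= rv <= 1 ->
  0 <= (1 - (1 - pu) * (1 - pv)) * (1 - ru * rv) + (pv - pu) * (ru - rv).
Proof.
move=> /andP[pu0 pu1] /andP[pv0 pv1] /andP[ru0 ru1] /andP[rv0 rv1].
have hp : `|pv - pu| <= 1 - (1 - pu) * (1 - pv).
  by rewrite ler_norml; apply/andP; split; nra.
have hr : `|ru - rv| <= 1 - ru * rv by rewrite ler_norml; apply/andP; split; nra.
have : `|(pv - pu) * (ru - rv)| <= (1 - (1 - pu) * (1 - pv)) * (1 - ru * rv).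
  by rewrite normrM; apply: ler_pM.
have := ler_norm (- ((pv - pu) * (ru - rv))); rewrite normrN; lra.
Qed.

(* x nodes, tt tu tv the reciprocals 1 / n_l of the numbers of communities
   and pt pu pv the edge probabilities of layers t u v; a pair has type
   (a, b, c) when it shares a community exactly in the layers selected by
   a b c.  type_count halves the count of ordered pairs, diagonal removed. *)
Section Core.
Variables (R : realFieldType) (x tt tu tv pt pu pv : R).

Definition type_count (a b c : bool) : R :=
  x ^+ 2 / 2 * (if a then tt else 1 - tt) * (if b then tu else 1 - tu)
  * (if c then tv else 1 - tv) - (if [&& a, b & c] then x / 2 else 0).

Definition union_prob (a b c : bool) : R :=
  1 - (if a then 1 - pt else 1) * (if b then 1 - pu else 1) * (if c then 1 - pv else 1).

Definition retain (ru rv : R) (b c : bool) : R :=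
  (if b then ru else 1) * (if c then rv else 1).

Definition intra3 (rho : bool -> bool -> R) : R :=
  \sum_(b : bool) \sum_(c : bool) type_count true b c * (union_prob true b c * rho b c).

Definition inter3 (rho : bool -> bool -> R) : R :=
  \sum_(b : bool) \sum_(c : bool) type_count false b c * (union_prob false b c * rho b c).

Local Notation one := (fun _ _ => 1).

Lemma intra3_inter3_gap :
  intra3 one * (x - x * tt) - inter3 one * (x * tt - 1) =
  x ^+ 2 / 2 * (1 - tt) * ((1 - tu * pu) * (1 - tv * pv) * (x * tt * pt - 1)
     + (1 - pt) * (1 - pu) * (1 - pv)).
Proof. by rewrite /intra3 /inter3 !big_bool /type_count /union_prob /=; ring. Qed.

(* With intra3 rho = sum_i alpha_i rho_i and inter3 rho = sum_i beta_i rho_i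
   over the types i of layers u v, the left side is the sum over i < j of
   (alpha_i beta_j - alpha_j beta_i) (rho_i - rho_j); as m00 m11 = m10 m01,
   the pairs {00, 11} and {10, 01} merge into the last summand of X, and Y
   comes from the diagonal correction of type 111. *)
Lemma retain_cross_gap ru rv :
  let K := x ^+ 2 / 2 in
  let m00 := (1 - tu) * (1 - tv) in let m10 := tu * (1 - tv) in
  let m01 := (1 - tu) * tv in let m11 := tu * tv in
  let X := m00 * m10 * pu * (1 - ru) + m00 * m01 * pv * (1 - rv)
    + m10 * m11 * pv * (1 - pu) * ru * (1 - rv) + m01 * m11 * pu * (1 - pv) * rv * (1 - ru)
    + m10 * m01 * ((1 - (1 - pu) * (1 - pv)) * (1 - ru * rv) + (pv - pu) * (ru - rv)) in
  let Y := m10 * pu * ru * (1 - rv) + m01 * pv * rv * (1 - ru) in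
  intra3 (retain ru rv) * inter3 one - intra3 one * inter3 (retain ru rv) =
  K * (1 - tt) * (K * tt * pt * X + x / 2 * (1 - (1 - pt) * (1 - pu) * (1 - pv)) * Y).
Proof. by rewrite /intra3 /inter3 !big_bool /type_count /union_prob /retain /=; ring. Qed.

Hypotheses (x0 : 0 < x) (tt0 : 0 < tt) (tt1 : tt < 1) (tu0 : 0 < tu) (tu1 : tu < 1)
  (tv0 : 0 < tv) (tv1 : tv < 1) (pt0 : 0 < pt) (pt1 : pt <= 1)
  (pu0 : 0 < pu) (pu1 : pu <= 1) (pv0 : 0 < pv) (pv1 : pv <= 1).
Hypothesis count_ge1 : 1 <= x * tt * tu * tv.

Let K_gt0 : 0 < x ^+ 2 / 2. Proof. by rewrite divr_gt0 ?exprn_gt0. Qed.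

Let select_ge0 (a : bool) (s : R) : 0 < s -> s < 1 -> 0 <= if a then s else 1 - s.
Proof. by case: a => s0 s1; rewrite ?subr_ge0 ltW. Qed.

Lemma type_count_ge0 a b c : 0 <= type_count a b c.
Proof.
rewrite /type_count; case: (boolP [&& a, b & c]) => [/and3P[-> -> ->] | _]; last first.
  by rewrite subr0; do 3 (apply: mulr_ge0; last exact: select_ge0); exact: ltW.
have -> : x ^+ 2 / 2 * tt * tu * tv - x / 2 = x / 2 * (x * tt * tu * tv - 1) by ring.
by rewrite mulr_ge0 ?subr_ge0 // divr_ge0 ?ltW.
Qed.

Lemma union_prob_ge0 a b c : 0 <= union_prob a b c.
Proof.
have sel (d : bool) (p : R) : 0 < p -> p <= 1 -> 0 <= (if d then 1 - p else 1) <= 1.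
  by case: d => p0 p1 //=; apply/andP; split; lra.
have /andP[a0 a1] := sel a pt pt0 pt1.
have /andP[b0 b1] := sel b pu pu0 pu1.
have /andP[c0 c1] := sel c pv pv0 pv1.
by rewrite subr_ge0 mulr_ile1 ?mulr_ge0 ?mulr_ile1.
Qed.

Let term_ge0 a b c (rho : bool -> bool -> R) :
  0 <= rho b c -> 0 <= type_count a b c * (union_prob a b c * rho b c).
Proof. by move=> r0; rewrite !mulr_ge0 ?type_count_ge0 ?union_prob_ge0. Qed.

Lemma intra3_gt0 rho : (forall b c, 0 <= rho b c) -> 0 < rho false false -> 0 < intra3 rho.
Proof.
move=> r0 rff.
have : 0 < type_count true false false * (union_prob true false false * rho false false).
  rewrite /type_count /union_prob /= subr0 !mulr1 subKr.
  by rewrite !mulr_gt0 ?subr_gt0 ?exprn_gt0 ?invr_gt0.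
have := @term_ge0 true true true _ (r0 true true).
have := @term_ge0 true true false _ (r0 true false).
have := @term_ge0 true false true _ (r0 false true).
by rewrite /intra3 !big_bool /=; lra.
Qed.

Lemma inter3_ge0 rho : (forall b c, 0 <= rho b c) -> 0 <= inter3 rho.
Proof.
move=> r0; rewrite /inter3 !big_bool /=.
by rewrite !addr_ge0 ?term_ge0.
Qed.

Lemma inter3_lt_intra3 :
  1 < x * tt * pt -> inter3 one * (x * tt - 1) < intra3 one * (x - x * tt).
Proof.
move=> dense; rewrite -subr_gt0 intra3_inter3_gap.
have tupu : tu * pu < 1 by apply: le_lt_trans tu1; rewrite ler_piMr // ltW.
have tvpv : tv * pv < 1 by apply: le_lt_trans tv1; rewrite ler_piMr // ltW.
apply: mulr_gt0; first by rewrite mulr_gt0 ?subr_gt0.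
by rewrite ltr_wpDr ?mulr_ge0 ?subr_ge0 // !mulr_gt0 ?subr_gt0.
Qed.

Lemma intra3_retain_cross ru rv : 0 <= ru -> ru < 1 -> 0 <= rv -> rv < 1 ->
  intra3 one * inter3 (retain ru rv) < intra3 (retain ru rv) * inter3 one.
Proof.
move=> ru0 ru1 rv0 rv1; rewrite -subr_gt0 retain_cross_gap /=.
have [pu_ge0 pv_ge0 tu_ge0 tv_ge0] : [/\ 0 <= pu, 0 <= pv, 0 <= tu & 0 <= tv].
  by split; apply: ltW.
have [pu_le1 pv_le1 tu_le1 tv_le1] :
    [/\ 0 <= 1 - pu, 0 <= 1 - pv, 0 <= 1 - tu & 0 <= 1 - tv].
  by split; rewrite subr_ge0 // ltW.
have [ru_le1 rv_le1] : 0 <= 1 - ru /\ 0 <= 1 - rv by split; rewrite subr_ge0 ltW.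
have hW : 0 <= 1 - (1 - pt) * (1 - pu) * (1 - pv) by apply: (union_prob_ge0 true true true).
have hZ : 0 <= (1 - (1 - pu) * (1 - pv)) * (1 - ru * rv) + (pv - pu) * (ru - rv).
  by apply: union_gap_ge0; rewrite ?pu_ge0 ?pv_ge0 ?pu1 ?pv1 ?ru0 ?rv0 ?ltW.
have hx2 : 0 <= x / 2 by rewrite divr_ge0 ?ltW.
apply: mulr_gt0; first by rewrite mulr_gt0 ?subr_gt0.
apply: ltr_wpDr; first by rewrite (mulr_ge0 (mulr_ge0 hx2 hW)) // addr_ge0 // !mulr_ge0.
apply: mulr_gt0; first by rewrite mulr_gt0 // mulr_gt0.
do 4 (apply: ltr_wpDr; first by rewrite !mulr_ge0).
by rewrite !mulr_gt0 ?subr_gt0.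
Qed.

End Core.

Section ThreeLayerModel.
Variables (R : realFieldType) (n : nat) (nl : 'I_3 -> nat) (p : 'I_3 -> R) (t u v : 'I_3).
Hypotheses (tu : t != u) (tv : t != v) (uv : u != v).

Local Notation th l := ((nl l)%:R^-1 : R).
Local Notation x := (n%:R : R).
Local Notation one := (fun _ _ => 1).
Local Notation enc := (enc t u v).
Local Notation type_count := (type_count x (th t) (th u) (th v)).
Local Notation intra3 := (intra3 x (th t) (th u) (th v) (p t) (p u) (p v)).
Local Notation inter3 := (inter3 x (th t) (th u) (th v) (p t) (p u) (p v)).

Lemma exactly_graph_enc a b c :
  exactly (graph_atleast R n nl) (enc a b c) = type_count a b c.
Proof.
rewrite (eq_exactly _ (@graph_atleastE _ _ n nl)) exactlyB !exactlyZ !exactly_prod.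
by rewrite !prod_enc //; case: a b c => [] [] []; rewrite /type_count /=; ring.
Qed.

Lemma intra_enc w :
  intra n nl w t = \sum_(b : bool) \sum_(c : bool) type_count true b c * w (enc true b c).
Proof.
rewrite /intra big_mkcond (sum_enc tu tv uv) !big_bool /= !enc_t //.
by rewrite !exactly_graph_enc; ring.
Qed.

Lemma inter_enc w :
  inter n nl w t = \sum_(b : bool) \sum_(c : bool) type_count false b c * w (enc false b c).
Proof.
rewrite /inter big_mkcond (sum_enc tu tv uv) !big_bool /= !enc_t //.
by rewrite /= !exactly_graph_enc; ring.
Qed.

Lemma orig_prob_enc a b c :
  orig_prob p (enc a b c) = union_prob (p t) (p u) (p v) a b c.
Proof. by rewrite /orig_prob big_mkcond prod_enc. Qed.

Lemma reduced_enc (w : {set 'I_3} -> R) a b c :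
  reduced n nl w [set~ t] (enc a b c) =
  w (enc a b c) * retain (retention n nl w u) (retention n nl w v) b c.
Proof. by rewrite /reduced enc_setC1 // big_mkcond prod_enc // /retain mul1r. Qed.

Lemma intra_orig : intra n nl (orig_prob p) t = intra3 one.
Proof. by rewrite intra_enc; do 2 (apply: eq_bigr => ? _); rewrite orig_prob_enc mulr1. Qed.

Lemma inter_orig : inter n nl (orig_prob p) t = inter3 one.
Proof. by rewrite inter_enc; do 2 (apply: eq_bigr => ? _); rewrite orig_prob_enc mulr1. Qed.

Lemma intra_reduced :
  let w := orig_prob p in
  intra n nl (reduced n nl w [set~ t]) t =
  intra3 (retain (retention n nl w u) (retention n nl w v)).
Proof.
by rewrite /= intra_enc; do 2 (apply: eq_bigr => ? _); rewrite reduced_enc orig_prob_enc.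
Qed.

Lemma inter_reduced :
  let w := orig_prob p in
  inter n nl (reduced n nl w [set~ t]) t =
  inter3 (retain (retention n nl w u) (retention n nl w v)).
Proof.
by rewrite /= inter_enc; do 2 (apply: eq_bigr => ? _); rewrite reduced_enc orig_prob_enc.
Qed.

Hypotheses (th01 : forall l, 0 < th l < 1) (p01 : forall l, 0 < p l <= 1).
Hypothesis count_ge1 : 1 <= x * \prod_l th l.

Let tt0 : 0 < th t. Proof. by case/andP: (th01 t). Qed.
Let tt1 : th t < 1. Proof. by case/andP: (th01 t). Qed.
Let tu0 : 0 < th u. Proof. by case/andP: (th01 u). Qed.
Let tu1 : th u < 1. Proof. by case/andP: (th01 u). Qed.
Let tv0 : 0 < th v. Proof. by case/andP: (th01 v). Qed.
Let tv1 : th v < 1. Proof. by case/andP: (th01 v). Qed.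
Let pt0 : 0 < p t. Proof. by case/andP: (p01 t). Qed.
Let pt1 : p t <= 1. Proof. by case/andP: (p01 t). Qed.
Let pu0 : 0 < p u. Proof. by case/andP: (p01 u). Qed.
Let pu1 : p u <= 1. Proof. by case/andP: (p01 u). Qed.
Let pv0 : 0 < p v. Proof. by case/andP: (p01 v). Qed.
Let pv1 : p v <= 1. Proof. by case/andP: (p01 v). Qed.
Let count3 : 1 <= x * th t * th u * th v.
Proof. by move: count_ge1; rewrite (prod3 tu tv uv) !mulrA. Qed.
Let x0 : 0 < x.
Proof. by rewrite ltr0n lt0n; apply: contraTneq count_ge1 => ->; rewrite mul0r ler10. Qed.

Lemma retention_orig_bounds :
  1 < x * th t * p t -> 0 <= retention n nl (orig_prob p) t < 1.
Proof.
move=> dense.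
have A0 : 0 < intra3 one by apply: intra3_gt0.
have B0 : 0 <= inter3 one by apply: inter3_ge0.
have s1 : 1 < x * th t.
  by apply: lt_le_trans dense _; rewrite ler_piMr // mulr_ge0 ?ltW.
have s0 : 0 < x * th t by apply: lt_trans s1.
have s2 : x * th t < x by rewrite gtr_pMr.
have nt0 : 0 < (nl t)%:R :> R by rewrite -invr_gt0.
rewrite retention_intra /csize ?intra_orig ?inter_orig ?gt_eqF ?subr_gt0 //.
have s1' : 0 <= x * th t - 1 by rewrite subr_ge0 ltW.
have s2' : 0 < x - x * th t by rewrite subr_gt0.
rewrite divr_ge0 ?mulr_ge0 ?(ltW A0) ?(ltW s2') //=.
rewrite ltr_pdivrMr ?mulr_gt0 // mul1r.
by apply: inter3_lt_intra3 => //; rewrite mulrAC.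
Qed.

Lemma modularity_reduced_gt_of_retention :
  let w := orig_prob p in
  0 <= retention n nl w u < 1 -> 0 <= retention n nl w v < 1 ->
  modularity n nl w t < modularity n nl (reduced n nl w [set~ t]) t.
Proof.
move=> /= /andP[ru0 ru1] /andP[rv0 rv1].
pose rho := retain (retention n nl (orig_prob p) u) (retention n nl (orig_prob p) v).
have rho0 b c : 0 <= rho b c by rewrite mulr_ge0 //; case: ifP.
have rhoff : 0 < rho false false by rewrite /rho /retain mulr1 ltr01.
have A0 : 0 < intra3 one by apply: intra3_gt0.
have A1 : 0 < intra3 rho by apply: intra3_gt0.
have B0 : 0 <= inter3 one by apply: inter3_ge0.
have B1 : 0 <= inter3 rho by apply: inter3_ge0.
have nt0 : (nl t)%:R != 0 :> R by rewrite gt_eqF // -invr_gt0.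
have S0 : intra3 one + inter3 one != 0 by rewrite gt_eqF ?ltr_wpDr.
have S1 : intra3 rho + inter3 rho != 0 by rewrite gt_eqF ?ltr_wpDr.
rewrite !modularity_intra ?intra_orig ?inter_orig ?intra_reduced ?inter_reduced // ltrD2r.
by apply: ltr_share => //; apply: intra3_retain_cross.
Qed.

End ThreeLayerModel.

Lemma modularity_reduced_gt (R : realFieldType) (n : nat) (nl : 'I_3 -> nat)
    (p : 'I_3 -> R) (t u v : 'I_3) :
  t != u -> t != v -> u != v ->
  (forall l, 0 < ((nl l)%:R^-1 : R) < 1) -> (forall l, 0 < p l <= 1) ->
  1 <= (n%:R * \prod_l (nl l)%:R^-1 : R) -> (forall l, 1 < n%:R * (nl l)%:R^-1 * p l) ->
  modularity n nl (orig_prob p) t < modularity n nl (reduced n nl (orig_prob p) [set~ t]) t.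
Proof.
move=> tu tv uv th01 p01 count dense.
have [ut vt vu] : [/\ u != t, v != t & v != u] by split; rewrite eq_sym.
apply: (modularity_reduced_gt_of_retention tu tv uv th01 p01 count).
  exact: (retention_orig_bounds ut uv tv th01 p01 count (dense u)).
exact: (retention_orig_bounds vt vu tu th01 p01 count (dense v)).
Qed.

Lemma other_layers (t : 'I_3) : exists u v : 'I_3, [/\ t != u, t != v & u != v].
Proof. by exists (t + 1), (t + 2); case: t => [[|[|[|?]]] ?]. Qed.

Lemma layer_csize_ge32 (nl : 'I_3 -> nat) (n : nat) (l : 'I_3) :
  (forall k, 4 <= nl k)%N -> (2 * \prod_k nl k <= n)%N -> (32 * nl l <= n)%N.
Proof.
move=> nl4; apply: leq_trans.
have : (16 <= \prod_(k | k != l) nl k)%N.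
  apply: leq_trans (leq_prod (fun k _ => nl4 k)).
  by rewrite prod_nat_const cardC1 card_ord.
move=> h; rewrite (bigD1 l) //= mulnCA (mulnC 32) leq_mul2l.
by apply/orP; right; apply: (leq_mul (leqnn 2) h).
Qed.

Lemma ratio_mul_gt1 (R : realFieldType) (n m : nat) (q : R) :
  (0 < m)%N -> (32 * m <= n)%N -> 20^-1 <= q -> 1 < n%:R * m%:R^-1 * q.
Proof.
move=> m0 hmn hq.
have : 32 <= n%:R * m%:R^-1 :> R.
  by rewrite ler_pdivlMr ?ltr0n // -natrM ler_nat.
have : 1 < 32 * 20^-1 :> R by rewrite ltr_pdivlMr // mul1r ltr_nat.
nra.
Qed.

Unset Implicit Arguments.

Theorem theorem14 (R : realFieldType) (n : nat) (nl : 'I_3 -> nat)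
    (p : 'I_3 -> R) (t : 'I_3) :
  (forall l, (4 <= nl l)%N) ->
  (forall l, (20%:R)^-1 <= p l <= 1) ->
  (2 * \prod_(l < 3) nl l <= n)%N ->
  modularity n nl (orig_prob p) t <
  modularity n nl (reduced n nl (orig_prob p) [set~ t]) t.
Proof.
move=> nl4 p20 hn.
have [u [v [tu tv uv]]] := other_layers t.
have nl0 l : (0 < nl l)%N by apply: leq_trans (nl4 l).
apply: (modularity_reduced_gt tu tv uv) => [l | l | | l].
- by rewrite invr_gt0 ltr0n nl0 invf_lt1 ?ltr0n // ltr1n (leq_trans _ (nl4 l)).
- case/andP: (p20 l) => p_ge ->; rewrite andbT; apply: lt_le_trans p_ge.
  by rewrite invr_gt0 ltr0n.
- rewrite prodfV -natr_prod ler_pdivlMr ?mul1r ?ler_nat ?ltr0n ?prodn_gt0 //.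
  by apply: leq_trans hn; rewrite leq_pmull.
- by apply: ratio_mul_gt1; [exact: nl0 | exact: layer_csize_ge32 | case/andP: (p20 l)].
Qed.
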